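(* Let $n\geq 1$. The assignment $\rho_i\mapsto\sigma_1\sigma_2\cdots\sigma_i$ ($1\leq i\leq n$) extends to a surjective group homomorphism from the group $\langle \rho_1,\dots,\rho_n\mid \rho_1\rho_n\rho_i=\rho_{i+1}\rho_n,\ 1\leq i\leq n-1\rangle$ (isomorphic to $G(n,n+1)$) onto the braid group $\mathcal{B}_{n+1}$.
   Context: $\mathcal{B}_{n+1}$ is the braid group with generators $\sigma_1,\dots,\sigma_n$ and relations $\sigma_i\sigma_{i+1}\sigma_i=\sigma_{i+1}\sigma_i\sigma_{i+1}$ for $1\leq i<n$ and $\sigma_i\sigma_j=\sigma_j\sigma_i$ for $|i-j|>1$. *)

From mathcomp Require Import all_boot.
Set Implicit Arguments. Unset Strict Implicit. Unset Printing Implicit Defensive.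

(* A letter is a generator together with an "inverse" flag (true = inverse). *)
Definition word (T : Type) := seq (T * bool).

Definition inv_letter (T : Type) (x : T * bool) : T * bool := (x.1, ~~ x.2).
Definition inv_word (T : Type) (w : word T) : word T := rev (map (@inv_letter T) w).

(* Equality in the group <T | rels>: the congruence on words generated by
   free cancellation and the relations l = r for rels l r. *)
Inductive peq (T : Type) (rels : word T -> word T -> Prop) : word T -> word T -> Prop :=
| peq_refl w : peq rels w w
| peq_sym w1 w2 : peq rels w1 w2 -> peq rels w2 w1
| peq_trans w1 w2 w3 : peq rels w1 w2 -> peq rels w2 w3 -> peq rels w1 w3
| peq_cancel u v x : peq rels (u ++ x :: inv_letter x :: v) (u ++ v)
| peq_rel u v l r : rels l r -> peq rels (u ++ l ++ v) (u ++ r ++ v).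

Definition gen (T : Type) (i : T) : T * bool := (i, false).

(* Braid group B_{n+1}: generators sigma_1..sigma_n, here indexed by 'I_n
   (index k stands for sigma_{k+1}). *)
Definition braid_rel (n : nat) (l r : word 'I_n) : Prop :=
  (exists i j : 'I_n, val j = (val i).+1 /\
      l = [:: gen i; gen j; gen i] /\ r = [:: gen j; gen i; gen j])
  \/ (exists i j : 'I_n, ((val i).+1 < val j \/ (val j).+1 < val i) /\
      l = [:: gen i; gen j] /\ r = [:: gen j; gen i]).

(* The group <rho_1..rho_n | rho_1 rho_n rho_i = rho_{i+1} rho_n, 1<=i<=n-1>,
   rho_{k+1} indexed by k : 'I_n. *)
Definition G_rel (n : nat) (l r : word 'I_n) : Prop :=
  exists i j k0 km : 'I_n,
    [/\ val k0 = 0, val km = n.-1, val j = (val i).+1,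
        l = [:: gen k0; gen km; gen i] & r = [:: gen j; gen km]].

Definition rho_img (n : nat) (k : 'I_n) : word 'I_n :=
  [seq gen j | j <- enum 'I_n & val j <= val k].

Definition letter_img (n : nat) (x : 'I_n * bool) : word 'I_n :=
  if x.2 then inv_word (rho_img x.1) else rho_img x.1.

Definition phi (n : nat) (w : word 'I_n) : word 'I_n := flatten (map (@letter_img n) w).

(* With Delta = sigma_1 ... sigma_n, conjugation by
      Delta shifts indices: Delta sigma_k = sigma_{k+1} Delta (k < n), hence
      Delta (sigma_1..sigma_i) = (sigma_2..sigma_{i+1}) Delta.  Prepending
      sigma_1 gives exactly the image of the defining relation of G.  For
      surjectivity, sigma_1 = phi(rho_1) and
      sigma_{j+1} = phi(rho_j^-1 rho_{j+1}). *)
From mathcomp Require Import all_boot zify.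
Set Implicit Arguments. Unset Strict Implicit. Unset Printing Implicit Defensive.

Section WordCongruence.
Variables (T : Type) (R : word T -> word T -> Prop).

Lemma peq_ctx (a b u v : word T) :
  peq R a b -> peq R (u ++ a ++ v) (u ++ b ++ v).
Proof.
move=> Hab; elim: Hab u v => {a b}.
- by move=> w u v; apply: peq_refl.
- by move=> w1 w2 _ IH u v; apply: peq_sym.
- by move=> w1 w2 w3 _ IH1 _ IH2 u v; apply: peq_trans (IH1 u v) (IH2 u v).
- move=> u' v' x u v; have H := peq_cancel R (u ++ u') (v' ++ v) x.
  by rewrite -!catA /= in H *.
- move=> u' v' l r Hr u v; have H := peq_rel (u ++ u') (v' ++ v) Hr.
  by rewrite -!catA /= in H *.
Qed.

Lemma peq_cat (a b c d : word T) :
  peq R a b -> peq R c d -> peq R (a ++ c) (b ++ d).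
Proof.
move=> Hab Hcd; apply: (@peq_trans _ _ _ (b ++ c)).
- by have := peq_ctx [::] c Hab.
- by have := peq_ctx b [::] Hcd; rewrite !cats0.
Qed.

Lemma peq_of_rel (l r : word T) : R l r -> peq R l r.
Proof. by move=> Hlr; have := peq_rel [::] [::] Hlr; rewrite /= !cats0. Qed.

Lemma peq_catl (a c d : word T) : peq R c d -> peq R (a ++ c) (a ++ d).
Proof. by apply: peq_cat; apply: peq_refl. Qed.

Lemma peq_catr (a b c : word T) : peq R a b -> peq R (a ++ c) (b ++ c).
Proof. by move=> Hab; apply: peq_cat Hab (peq_refl _ _). Qed.

Lemma inv_wordK (w : word T) : inv_word (inv_word w) = w.
Proof.
rewrite /inv_word map_rev revK -map_comp -[RHS]map_id.
by apply: eq_map => -[a b]; rewrite /inv_letter /= negbK.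
Qed.

Lemma inv_word_cat (a b : word T) : inv_word (a ++ b) = inv_word b ++ inv_word a.
Proof. by rewrite /inv_word map_cat rev_cat. Qed.

Lemma cat_inv (w : word T) : peq R (w ++ inv_word w) [::].
Proof.
elim: w => [|x w IH] /=; first exact: peq_refl.
rewrite -[x :: w]cat1s inv_word_cat catA.
apply: (@peq_trans _ _ _ ([:: x] ++ inv_word [:: x])); last first.
  exact: (peq_cancel R [::] [::] x).
by have := peq_ctx [:: x] (inv_word [:: x]) IH.
Qed.

Lemma inv_cat (w : word T) : peq R (inv_word w ++ w) [::].
Proof. by have := cat_inv (inv_word w); rewrite inv_wordK. Qed.

(* Equal group elements have equal inverses: inv a = inv a . b . inv b
   = inv a . a . inv b = inv b. *)
Lemma peq_inv (a b : word T) : peq R a b -> peq R (inv_word a) (inv_word b).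
Proof.
move=> Hab.
apply: (@peq_trans _ _ _ (inv_word a ++ b ++ inv_word b)).
  by have := peq_catl (inv_word a) (peq_sym (cat_inv b)); rewrite cats0.
apply: (@peq_trans _ _ _ ((inv_word a ++ a) ++ inv_word b)).
  by rewrite -catA; apply/peq_catl/peq_catr/peq_sym.
exact: (peq_catr (inv_word b) (inv_cat a)).
Qed.

Lemma peq_commute_word (s : word T) (x : T * bool) :
  (forall y, List.In y s -> peq R [:: y; x] [:: x; y]) ->
  peq R (s ++ [:: x]) (x :: s).
Proof.
elim: s => [|y s IH] Hs /=; first exact: peq_refl.
apply: (@peq_trans _ _ _ (y :: x :: s)).
  by apply: (peq_catl [:: y]); apply: IH => z Hz; apply: Hs; right.
exact: (peq_ctx [::] s (Hs y (or_introl erefl))).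
Qed.

End WordCongruence.

Section LetterSubstitution.
Variables (T T' : Type) (f : T * bool -> word T').

Definition wmap (w : word T) : word T' := flatten (map f w).

Lemma wmap_cat (a b : word T) : wmap (a ++ b) = wmap a ++ wmap b.
Proof. by rewrite /wmap map_cat flatten_cat. Qed.

Hypothesis f_inv : forall x, f (inv_letter x) = inv_word (f x).

Lemma wmap_inv (w : word T) : wmap (inv_word w) = inv_word (wmap w).
Proof.
elim: w => [|x w IH] //.
rewrite -[x :: w]cat1s inv_word_cat !wmap_cat IH inv_word_cat.
by congr (_ ++ _); rewrite /wmap /= !cats0 f_inv.
Qed.

Variables (R : word T -> word T -> Prop) (R' : word T' -> word T' -> Prop).

Lemma wmap_peq :
  (forall l r, R l r -> peq R' (wmap l) (wmap r)) ->
  forall a b, peq R a b -> peq R' (wmap a) (wmap b).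
Proof.
move=> f_rel a b; elim=> {a b}.
- by move=> w; apply: peq_refl.
- by move=> w1 w2 _ IH; apply: peq_sym.
- by move=> w1 w2 w3 _ IH1 _ IH2; apply: peq_trans IH1 IH2.
- move=> u v x; rewrite !wmap_cat /= -cat1s -(cat1s (inv_letter x)) !wmap_cat.
  have Hx : peq R' (wmap [:: x] ++ wmap [:: inv_letter x]) [::].
    by rewrite /wmap /= !cats0 f_inv; apply: cat_inv.
  by have := peq_ctx (wmap u) (wmap v) Hx; rewrite !catA.
- by move=> u v l r Hr; rewrite !wmap_cat; apply: peq_ctx; apply: f_rel.
Qed.

Lemma wmap_onto :
  (forall t : T', exists w, peq R' (wmap w) [:: gen t]) ->
  forall v : word T', exists w, peq R' (wmap w) v.
Proof.
move=> f_gen; elim=> [|[t b] v [w Hw]]; first by exists [::]; apply: peq_refl.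
suff [wt Ht] : exists wt, peq R' (wmap wt) [:: (t, b)].
  by exists (wt ++ w); rewrite wmap_cat -cat1s; apply: peq_cat.
have [wt Ht] := f_gen t; case: b; last by exists wt.
by exists (inv_word wt); rewrite wmap_inv; apply: (peq_inv Ht).
Qed.

End LetterSubstitution.

Lemma letter_img_inv n (x : 'I_n * bool) :
  letter_img (inv_letter x) = inv_word (letter_img x).
Proof. by case: x => o [] //=; rewrite /letter_img /= inv_wordK. Qed.

Section BraidComputations.
(* The braid group on m.+2 strands, with generators sigma_1 .. sigma_{m+1}
   indexed from 0. *)
Variable m : nat.
Local Notation braid_peq := (peq (@braid_rel m.+1)).

Definition sigma (j : nat) : 'I_m.+1 * bool := gen (inord j).

Definition sigma_run (a k : nat) : word 'I_m.+1 := map sigma (iota a k).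

Lemma sigma_ord (o : 'I_m.+1) : sigma o = gen o.
Proof. by rewrite /sigma inord_val. Qed.

Lemma sigma_runSr a k : sigma_run a k.+1 = sigma_run a k ++ [:: sigma (a + k)].
Proof. by rewrite /sigma_run -[k.+1]addn1 iotaD map_cat. Qed.

Lemma rho_img_run (k : 'I_m.+1) : rho_img k = sigma_run 0 k.+1.
Proof.
have -> : rho_img k = map sigma [seq j <- iota 0 m.+1 | j <= k].
  have := filter_map val (fun x => x <= val k) (enum 'I_m.+1).
  rewrite val_enum_ord => ->; rewrite -map_comp /rho_img.
  by apply: eq_map => j /=; rewrite sigma_ord.
rewrite /sigma_run; congr map; move: (ltn_ord k); move: (val k) => j hj.
rewrite -(subnKC hj) iotaD filter_cat.
rewrite (@eq_in_filter _ _ predT) => [|x]; last by rewrite mem_iota.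
rewrite filter_predT (@eq_in_filter _ _ pred0) => [|x]; last first.
  by rewrite mem_iota add0n /= => /andP [hx _]; rewrite leqNgt hx.
by rewrite filter_pred0 cats0.
Qed.

Lemma sigma_far_comm a b : a < m.+1 -> b < m.+1 -> a.+1 < b \/ b.+1 < a ->
  braid_peq [:: sigma a; sigma b] [:: sigma b; sigma a].
Proof.
move=> ha hb hab.
apply: peq_of_rel; right.
by exists (inord a), (inord b); rewrite /= !inordK.
Qed.

Lemma sigma_braid a : a.+1 < m.+1 ->
  braid_peq [:: sigma a; sigma a.+1; sigma a] [:: sigma a.+1; sigma a; sigma a.+1].
Proof.
move=> ha; apply: peq_of_rel; left.
by exists (inord a), (inord a.+1); rewrite /= !inordK // ltnW.
Qed.

Definition delta : word 'I_m.+1 := sigma_run 0 m.+1.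

Lemma sigma_run_comm a k j : j < m.+1 -> a + k <= m.+1 ->
  j.+1 < a \/ a + k < j ->
  braid_peq (sigma_run a k ++ [:: sigma j]) (sigma j :: sigma_run a k).
Proof.
move=> hj hak hfar; apply: peq_commute_word => y /(@List.in_map_iff) [i [<-]].
move/(@List.in_seq) => hi; apply: sigma_far_comm; lia.
Qed.

Lemma delta_shift1 k : k.+1 < m.+1 ->
  braid_peq (delta ++ [:: sigma k]) (sigma k.+1 :: delta).
Proof.
move=> hk; set r := sigma_run k.+2 (m.+1 - k.+2).
have eD : delta = sigma_run 0 k ++ [:: sigma k; sigma k.+1] ++ r.
  have eN : m.+1 = k + (m.+1 - k.+2).+2 by lia.
  by rewrite /delta /r /sigma_run [in iota 0 m.+1]eN iotaD map_cat.
have Hr : braid_peq (r ++ [:: sigma k]) (sigma k :: r).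
  by apply: sigma_run_comm; lia.
have Hl : braid_peq (sigma_run 0 k ++ [:: sigma k.+1]) (sigma k.+1 :: sigma_run 0 k).
  by apply: sigma_run_comm; lia.
rewrite eD -!catA.
apply: (@peq_trans _ _ _ (sigma_run 0 k ++ [:: sigma k; sigma k.+1; sigma k] ++ r)).
  by apply: peq_catl; apply: (peq_catl [:: sigma k; sigma k.+1] Hr).
apply: (@peq_trans _ _ _ (sigma_run 0 k ++ [:: sigma k.+1; sigma k; sigma k.+1] ++ r)).
  exact: peq_ctx (sigma_braid hk).
by have := peq_ctx [::] ([:: sigma k; sigma k.+1] ++ r) Hl; rewrite /= -!catA.
Qed.

Lemma delta_shift i : i < m.+1 ->
  braid_peq (delta ++ sigma_run 0 i) (sigma_run 1 i ++ delta).
Proof.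
elim: i => [|i IH] hi; first by rewrite cats0; apply: peq_refl.
rewrite !sigma_runSr add0n add1n catA.
apply: (@peq_trans _ _ _ ((sigma_run 1 i ++ delta) ++ [:: sigma i])).
  by apply: peq_catr; apply: IH; apply: ltnW.
by rewrite -!catA; apply: peq_catl; apply: delta_shift1.
Qed.

Lemma phi_G_rel (l r : word 'I_m.+1) : G_rel l r -> braid_peq (phi l) (phi r).
Proof.
case=> i [j [k0 [km [h0 hm hj -> ->]]]].
rewrite /phi /= !cats0 /letter_img /= !rho_img_run h0 hm hj.
have hi : (val i).+1 < m.+1 by rewrite -hj ltn_ord.
by have := peq_catl [:: sigma 0] (delta_shift hi).
Qed.

Lemma phi_hits_gen (o : 'I_m.+1) : exists w, braid_peq (phi w) [:: gen o].
Proof.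
rewrite -sigma_ord; case eo: (val o) => [|j].
  by exists [:: gen o]; rewrite /phi /= cats0 /letter_img rho_img_run eo; apply: peq_refl.
have hj : j < m.+1 by rewrite ltnW // -eo ltn_ord.
exists [:: ((inord j : 'I_m.+1), true); gen o].
rewrite /phi /= cats0 /letter_img /= !rho_img_run eo inordK // (sigma_runSr 0 j.+1) add0n catA.
by have := peq_catr [:: sigma j.+1] (inv_cat (@braid_rel m.+1) (sigma_run 0 j.+1)).
Qed.

End BraidComputations.

Theorem proposition4p3 (n : nat) (hn : 1 <= n) :
  (forall w1 w2 : word 'I_n,
      peq (@G_rel n) w1 w2 -> peq (@braid_rel n) (phi w1) (phi w2)) /\
  (forall v : word 'I_n, exists w : word 'I_n, peq (@braid_rel n) (phi w) v).
Proof.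
case: n hn => // m _; split.
- exact: (wmap_peq (@letter_img_inv m.+1) (@phi_G_rel m)).
- exact: (wmap_onto (@letter_img_inv m.+1) (@phi_hits_gen m)).
Qed.
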